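(* Let $G,D\subsetneq\mathbb{R}^n$ be domains, and let $f:G\to D$ be a surjective mapping and $L\ge1$ such that \[ b_{G,\infty}(z_1,z_2)/L\le b_{D,\infty}(f(z_1),f(z_2))\le L\,b_{G,\infty}(z_1,z_2)\quad\text{for all } z_1,z_2\in G. \] Then $f$ is a quasiconformal homeomorphism (either sense-preserving or sense-reversing), and its linear dilatation satisfies $H_f(z)\le 4L^2$ for all $z\in G$.
   Context: For a domain $G\subsetneq\mathbb{R}^n$ and $z_1,z_2\in G$, $b_{G,\infty}(z_1,z_2)=\sup_{w\in\partial G}\frac{|z_1-z_2|}{\max\{|z_1-w|,|z_2-w|\}}$. For a homeomorphism $f$ and $z\in G$, the linear dilatation is $H_f(z)=\limsup_{r\to0}\frac{L_f(z,r)}{l_f(z,r)}$, where $L_f(z,r)=\sup\{|f(z_1)-f(z)|:|z_1-z|=r\}$ and $l_f(z,r)=\inf\{|f(z_1)-f(z)|:|z_1-z|=r\}$. *)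

From HB Require Import structures.
From mathcomp Require Import all_boot all_order all_algebra.
From mathcomp Require Import all_classical all_reals all_analysis.
Set Implicit Arguments. Unset Strict Implicit. Unset Printing Implicit Defensive.
Import Order.TTheory GRing.Theory Num.Theory.
Import numFieldNormedType.Exports.
Local Open Scope classical_set_scope.
Local Open Scope ring_scope.

Section Defs.
Variables (R : realType) (n : nat).
Notation V := 'rV[R]_n.

(* Euclidean norm and distance on R^n (MathComp's own norm on 'rV is the sup norm). *)
Definition enorm (x : V) : R := Num.sqrt (\sum_(i < n) x ord0 i ^+ 2).
Definition edist (x y : V) : R := enorm (x - y).

(* A domain: nonempty, open, connected (the topology on 'rV is the product
   topology, which coincides with the Euclidean one). *)
Definition domain (G : set V) : Prop := G !=set0 /\ open G /\ connected G.

Definition bdry (G : set V) : set V := closure G `\` interior G.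

Definition b_infty (G : set V) (z1 z2 : V) : \bar R :=
  ereal_sup [set ((edist z1 z2) / Num.max (edist z1 w) (edist z2 w))%:E
            | w in bdry G].

Definition Lf (f : V -> V) (z : V) (r : R) : \bar R :=
  ereal_sup [set (edist (f z1) (f z))%:E | z1 in [set z1 | edist z1 z = r]].
Definition lf (f : V -> V) (z : V) (r : R) : \bar R :=
  ereal_inf [set (edist (f z1) (f z))%:E | z1 in [set z1 | edist z1 z = r]].

Definition Hf (f : V -> V) (z : V) : \bar R :=
  limf_esup (fun r => (Lf f z r / lf f z r)%E) (0%R : R)^'+.

Definition homeo_onto (f : V -> V) (G D : set V) : Prop :=
  {within G, continuous f} /\ f @` G = D /\
  exists g : V -> V, {within D, continuous g} /\ g @` D = G /\
    (forall x, G x -> g (f x) = x) /\ (forall y, D y -> f (g y) = y).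

Definition quasiconformal (f : V -> V) (G D : set V) : Prop :=
  homeo_onto f G D /\ exists H : R, forall z, G z -> (Hf f z <= H%:E)%E.

End Defs.

From Pilot Require Import Defs.
From HB Require Import structures.
From mathcomp Require Import all_boot all_order all_algebra.
From mathcomp Require Import all_classical all_reals all_analysis.
From mathcomp.algebra_tactics Require Import ring lra.
Set Implicit Arguments. Unset Strict Implicit. Unset Printing Implicit Defensive.
Import Order.TTheory GRing.Theory Num.Theory.
Import numFieldNormedType.Exports.
Local Open Scope classical_set_scope.
Local Open Scope ring_scope.

(* Let d(z) be the distance from z to the boundary of G.  Every boundary point
   is at distance at least d(z) from z, so b_G(z,z') <= |z-z'| / d(z); and any
   boundary point w of D gives b_D(y,y') >= |y-y'| / (|y-w| + |y-y'|).  Feeding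
   these two estimates into the two-sided bound on b makes f
   (and symmetrically its inverse) locally Lipschitz, hence continuous, while
   b_G(x,x') > 0 = b_D(f x, f x) for x <> x' forces injectivity.  On a small
   sphere |z1 - z| = r, taking boundary points within a quarter of the boundary
   distance of z and of f z, the same estimates give
     (2/3) r d(fz) / (L d(z)) <= |f z1 - f z| <= (5/2) L r d(fz) / d(z),
   so H_f(z) <= 15 L^2 / 4 <= 4 L^2. *)

(* MathComp-Analysis has its own [edist] (the extended distance of a
   pseudometric space); here [edist] is always the Euclidean one of Defs. *)
Local Notation edist := Defs.edist.

Section EuclideanNorm.
Variables (R : realType) (n : nat).
Implicit Types x y z : 'rV[R]_n.

Definition dot x y := \sum_(i < n) x ord0 i * y ord0 i.

Lemma enorm_ge0 x : 0 <= enorm x. Proof. exact: sqrtr_ge0. Qed.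

Lemma dotxx_ge0 x : 0 <= dot x x.
Proof. by apply: sumr_ge0 => i _; rewrite -expr2 sqr_ge0. Qed.

Lemma enorm_sqr x : enorm x ^+ 2 = dot x x.
Proof.
have -> : enorm x = Num.sqrt (dot x x).
  by congr Num.sqrt; apply: eq_bigr => i _; rewrite expr2.
by rewrite sqr_sqrtr // dotxx_ge0.
Qed.

Lemma enorm_eq0 x : enorm x = 0 -> x = 0.
Proof.
move=> x0; have /eqP : dot x x = 0 by rewrite -enorm_sqr x0 expr0n.
rewrite psumr_eq0 => [/allP x_eq0|i _]; last by rewrite -expr2 sqr_ge0.
apply/rowP => i; rewrite mxE; apply/eqP; rewrite -sqrf_eq0 expr2.
exact: implyP (x_eq0 i (mem_index_enum _)) isT.
Qed.

Lemma enormN x : enorm (- x) = enorm x.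
Proof. by congr Num.sqrt; apply: eq_bigr => i _; rewrite mxE sqrrN. Qed.

Lemma enorm0 : enorm (0 : 'rV[R]_n) = 0.
Proof. by rewrite /enorm big1 ?sqrtr0 // => i _; rewrite mxE expr0n. Qed.

Lemma dot_le_enorm x y : dot x y <= enorm x * enorm y.
Proof.
have expand a b : \sum_(i < n) (b * x ord0 i - a * y ord0 i) ^+ 2
    = b ^+ 2 * dot x x - 2 * a * b * dot x y + a ^+ 2 * dot y y.
  by rewrite /dot !mulr_sumr -sumrB -big_split /=; apply: eq_bigr => i _; ring.
have : 0 <= 2 * (enorm x * enorm y) * (enorm x * enorm y - dot x y).
  have -> : 2 * (enorm x * enorm y) * (enorm x * enorm y - dot x y)
      = \sum_(i < n) (enorm y * x ord0 i - enorm x * y ord0 i) ^+ 2.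
    by rewrite expand -!enorm_sqr; ring.
  by rewrite sumr_ge0 // => i _; rewrite sqr_ge0.
have [xy0|xy_neq0] := eqVneq (enorm x * enorm y) 0; last first.
  have xy_gt0 : 0 < enorm x * enorm y.
    by rewrite lt_neqAle eq_sym xy_neq0 mulr_ge0 ?enorm_ge0.
  nra.
move=> _; rewrite xy0; move/eqP: xy0; rewrite mulf_eq0 => /orP[] /eqP/enorm_eq0 ->;
  by rewrite /dot big1 // => i _; rewrite mxE ?mul0r ?mulr0.
Qed.

Lemma enormD x y : enorm (x + y) <= enorm x + enorm y.
Proof.
rewrite -(ler_pXn2r (isT : (0 < 2)%N)) ?nnegrE ?addr_ge0 ?enorm_ge0 //.
have -> : enorm (x + y) ^+ 2 = enorm x ^+ 2 + 2 * dot x y + enorm y ^+ 2.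
  rewrite !enorm_sqr /dot !mulr_sumr -!big_split /=.
  by apply: eq_bigr => i _; rewrite mxE; ring.
by rewrite sqrrD lerD2r lerD2l; have := dot_le_enorm x y; lra.
Qed.

Lemma edistC x y : edist x y = edist y x.
Proof. by rewrite /edist -enormN opprB. Qed.

Lemma edist_ge0 x y : 0 <= edist x y.
Proof. exact: enorm_ge0. Qed.

Lemma edistxx x : edist x x = 0.
Proof. by rewrite /edist subrr enorm0. Qed.

Lemma edist_triangle x y z : edist x z <= edist x y + edist y z.
Proof.
by rewrite /edist (_ : x - z = (x - y) + (y - z)) ?enormD // addrA subrK.
Qed.

Lemma edist_gt0 x y : x != y -> 0 < edist x y.
Proof.
move=> xy; rewrite lt_neqAle enorm_ge0 andbT eq_sym.
by apply: contra xy => /eqP/enorm_eq0/eqP; rewrite subr_eq0.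
Qed.

Lemma coord_le_enorm x i : `|x ord0 i| <= enorm x.
Proof.
rewrite -sqrtr_sqr ler_wsqrtr // (bigD1 i) //= lerDl.
by rewrite sumr_ge0 // => j _; rewrite sqr_ge0.
Qed.

Lemma coord_le_normr x i : `|x ord0 i| <= `|x|.
Proof.
rewrite [`|x|]mx_normrE.
exact: (le_bigmax _ (fun ij : 'I_1 * 'I_n => `|x ij.1 ij.2|) (ord0, i)).
Qed.

Lemma normr_le_enorm x : `|x| <= enorm x.
Proof.
rewrite [`|x|]mx_normrE; apply/bigmax_leP; split=> [|[i j] _ /=]; first exact: enorm_ge0.
by rewrite (ord1 i); exact: coord_le_enorm.
Qed.

Lemma enorm_le_normr x : enorm x <= n%:R * `|x|.
Proof.
rewrite -(ler_pXn2r (isT : (0 < 2)%N)) ?nnegrE ?enorm_ge0 ?mulr_ge0 //.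
rewrite /enorm sqr_sqrtr ?sumr_ge0 // => [|i _]; last exact: sqr_ge0.
apply: (@le_trans _ _ (\sum_(i < n) `|x| ^+ 2)).
  apply: ler_sum => i _.
  by rewrite -real_normK ?num_real // lerXn2r ?nnegrE ?coord_le_normr.
rewrite sumr_const card_ord -[X in X <= _]mulr_natl exprMn ler_wpM2r ?sqr_ge0 //.
by rewrite -natrX ler_nat; case: (n) => // m; rewrite leq_pmulr.
Qed.

End EuclideanNorm.

Section Boundary.
Variables (R : realType) (n : nat).
Implicit Types (G : set 'rV[R]_n) (x y z w : 'rV[R]_n).

Lemma open_bdryN G : open G -> bdry G `<=` ~` G.
Proof.
by move=> oG w [_ Gw_int] Gw; apply: Gw_int; move: oG; rewrite openE => /(_ w Gw).
Qed.

Lemma edist_nbhs z (d : R) : 0 < d -> \forall y \near z, edist z y < d.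
Proof.
move=> d_gt0; apply/nbhs_normP; exists (d / (n%:R + 1)) => [|y /= zy].
  by rewrite /= divr_gt0 // ltr_wpDl.
apply: le_lt_trans (enorm_le_normr _) _.
have : `|z - y| * (n%:R + 1) < d by rewrite -ltr_pdivlMr // ltr_wpDl.
have := normr_ge0 (z - y); have : (0 : R) <= n%:R by []; nra.
Qed.

(* Without boundary points G would be clopen, and its preimage under the
   segment from a point of G to a point outside G would split the line. *)
Lemma bdry_neq0 G : open G -> G !=set0 -> G != setT -> bdry G !=set0.
Proof.
move=> oG [z Gz] GT; apply: contrapT => no_bdry.
have [p nGp] : exists p, ~ G p.
  apply: contrapT => allG; move/negP: GT; apply; apply/eqP/seteqP; split => // y _.
  by apply: contrapT => nGy; apply: allG; exists y.
pose h (t : R) : 'rV[R]_n := z + t *: (p - z).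
have h_cont : continuous h.
  by move=> t; apply: cvgD; [exact: cvg_cst | apply: cvgZr_tmp; exact: cvg_id].
have G_closed : closed G.
  move=> y cy; apply: contrapT => nGy; apply: no_bdry; exists y; split => //.
  by move=> /interior_subset.
have G_clopen : open (h @^-1` G) /\ closed (h @^-1` G).
  split; first by apply: open_comp => // t _; exact: h_cont.
  by apply: preimage_closed => // t _; exact: h_cont.
have R_connected : connected [set: R] by apply/connected_intervalP.
have : (h @^-1` G) 1.
  rewrite (R_connected (h @^-1` G)) //.
  - by exists 0; rewrite /h /= scale0r addr0.
  - by exists (h @^-1` G); [exact: G_clopen.1 | rewrite setTI].
  - by exists (h @^-1` G); [exact: G_clopen.2 | rewrite setTI].
by rewrite /h /= scale1r addrC subrK.
Qed.

(* When [bdry G] is empty the [inf] is the junk value 0, hence the hypotheses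
   [bdry G !=set0] below. *)
Definition bdist G z := inf [set edist z w | w in bdry G].

Lemma bdist_le G z w : bdry G w -> bdist G z <= edist z w.
Proof.
by move=> Gw; apply: ge_inf; [exists 0 => _ [v _ <-]; exact: edist_ge0 | exists w].
Qed.

Lemma bdist_ge G z (d : R) : bdry G !=set0 ->
  (forall w, bdry G w -> d <= edist z w) -> d <= bdist G z.
Proof.
move=> [w Gw] zd; apply: lb_le_inf; first by exists (edist z w), w.
by move=> _ [v Gv <-]; exact: zd.
Qed.

Lemma bdist_approx G z (eps : R) : bdry G !=set0 -> 0 < eps ->
  exists2 w, bdry G w & edist z w <= bdist G z + eps.
Proof.
move=> [w0 Gw0] eps_gt0.
have [|_ [w Gw <-] zw] := @inf_adherent _ [set edist z w | w in bdry G] _ eps_gt0.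
  by split; [exists (edist z w0), w0 | exists 0 => _ [v _ <-]; exact: edist_ge0].
by exists w => //; exact: ltW.
Qed.

Lemma open_bdist_ball G z : open G -> bdry G !=set0 -> G z ->
  exists2 d : R, 0 < d <= bdist G z & forall y, edist z y < d -> G y.
Proof.
move=> oG G_ne Gz; have : nbhs z G by move: oG; rewrite openE => /(_ z Gz).
move/nbhs_normP => [d d_gt0 zdG].
have ball_G y : edist z y < d -> G y.
  by move=> zy; apply: zdG; exact: le_lt_trans (normr_le_enorm _) zy.
exists d => //; rewrite d_gt0 /=; apply: bdist_ge => // w Gw.
by rewrite leNgt; apply/negP => /ball_G; exact: open_bdryN Gw.
Qed.

Lemma bdist_gt0 G z : open G -> bdry G !=set0 -> G z -> 0 < bdist G z.
Proof.
by move=> oG G_ne Gz; have [d /andP[d_gt0 d_le] _] := open_bdist_ball oG G_ne Gz;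
  exact: lt_le_trans d_le.
Qed.

End Boundary.

Section BInfty.
Variables (R : realType) (n : nat).
Implicit Types (A B G : set 'rV[R]_n) (x y z w : 'rV[R]_n).

Lemma b_infty_le_bdist G z z' : 0 < bdist G z ->
  (b_infty G z z' <= (edist z z' / bdist G z)%:E)%E.
Proof.
move=> Gz_gt0; apply: ge_ereal_sup => _ [w Gw <-]; rewrite lee_fin.
have zw_le : bdist G z <= Num.max (edist z w) (edist z' w).
  by apply: le_trans (bdist_le z Gw) _; rewrite le_max lexx.
by rewrite ler_wpM2l ?edist_ge0 // lef_pV2 ?posrE // (lt_le_trans Gz_gt0).
Qed.

Lemma b_infty_ge G z z' w : bdry G w ->
  ((edist z z' / (edist z w + edist z z'))%:E <= b_infty G z z')%E.
Proof.
move=> Gw; apply: le_trans (ereal_sup_ubound _); last by exists w.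
rewrite lee_fin; have [zz'0|zz'_neq0] := eqVneq (edist z z') 0.
  by rewrite zz'0 !mul0r.
have zz'_gt0 : 0 < edist z z' by rewrite lt_neqAle eq_sym zz'_neq0 edist_ge0.
have zw_le : edist z w <= Num.max (edist z w) (edist z' w) by rewrite le_max lexx.
have z'w_le : edist z' w <= Num.max (edist z w) (edist z' w).
  by rewrite le_max lexx orbT.
have z'w_tri : edist z' w <= edist z w + edist z z'.
  by rewrite addrC (edistC z z'); exact: edist_triangle.
have zz'_tri := edist_triangle z w z'; rewrite (edistC w z') in zz'_tri.
have zw_ge0 : 0 <= edist z w := edist_ge0 _ _.
rewrite ler_wpM2l ?edist_ge0 // lef_pV2 ?posrE; [|lra|lra].
by rewrite ge_max z'w_tri lerDl edist_ge0.
Qed.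

Lemma b_infty_xx G z : (b_infty G z z <= 0)%E.
Proof. by apply: ge_ereal_sup => _ [w _ <-]; rewrite edistxx mul0r. Qed.

Lemma b_infty_gt0 G z z' : open G -> bdry G !=set0 -> G z -> z != z' ->
  (0 < b_infty G z z')%E.
Proof.
move=> oG [w Gw] Gz zz'; apply: lt_le_trans (b_infty_ge z z' Gw); rewrite lte_fin.
have zw : z != w by apply/eqP => zw; apply: (open_bdryN oG Gw); rewrite -zw.
by rewrite divr_gt0 ?addr_gt0 ?edist_gt0.
Qed.

Lemma b_infty_ratio_le A B x x' y y' w (K : R) :
  bdry B w -> 0 < bdist A x -> 0 <= K ->
  (b_infty B y y' <= K%:E * b_infty A x x')%E ->
  edist y y' / (edist y w + edist y y') <= K * (edist x x' / bdist A x).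
Proof.
move=> Bw Ax_gt0 K_ge0 bBA; rewrite -lee_fin [X in (_ <= X)%E]EFinM.
apply: le_trans (b_infty_ge y y' Bw) (le_trans bBA _).
by apply: lee_wpmul2l; [rewrite lee_fin | exact: b_infty_le_bdist].
Qed.

Lemma le_of_ratio_le (rho M s : R) : 0 <= rho -> 0 <= M -> s <= 2^-1 ->
  rho / (M + rho) <= s -> rho <= 2 * s * M.
Proof.
move=> rho_ge0 M_ge0 s_le ratio_le.
have s_ge0 := le_trans (divr_ge0 rho_ge0 (addr_ge0 M_ge0 rho_ge0)) ratio_le.
have [Mrho0|Mrho_neq0] := eqVneq (M + rho) 0.
  have -> : rho = 0 by lra.
  by rewrite !mulr_ge0.
rewrite ler_pdivrMr ?lt_neqAle 1?eq_sym ?Mrho_neq0 ?addr_ge0 // in ratio_le.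
nra.
Qed.

Lemma edist_le_of_b_infty A B x x' y y' w (K : R) :
  bdry B w -> 0 < bdist A x -> 0 < K ->
  (b_infty B y y' <= K%:E * b_infty A x x')%E ->
  edist x x' <= bdist A x / (2 * K) ->
  edist y y' <= 2 * K * edist y w / bdist A x * edist x x'.
Proof.
move=> Bw Ax_gt0 K_gt0 bBA xx'_le.
have ratio_le := b_infty_ratio_le Bw Ax_gt0 (ltW K_gt0) bBA.
have s_le : K * (edist x x' / bdist A x) <= 2^-1.
  rewrite ler_pdivlMr ?mulr_gt0 // in xx'_le.
  rewrite mulrA ler_pdivrMr //; nra.
rewrite (_ : _ * edist x x' = 2 * (K * (edist x x' / bdist A x)) * edist y w).
  exact: le_of_ratio_le (edist_ge0 _ _) (edist_ge0 _ _) s_le ratio_le.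
by ring.
Qed.

End BInfty.

Section Continuity.
Variables (R : realType) (n : nat).
Implicit Types (A B : set 'rV[R]_n) (phi : 'rV[R]_n -> 'rV[R]_n).

Lemma within_continuous_edist A phi :
  (forall x, A x -> exists2 d : R, 0 < d & exists C : R, forall x', A x' ->
     edist x x' <= d -> edist (phi x) (phi x') <= C * edist x x') ->
  {within A, continuous phi}.
Proof.
move=> phi_lip; apply/subspace_continuousP => x Ax.
have [d d_gt0 [C phiC]] := phi_lip x Ax.
apply/cvgrPdist_lt => eps eps_gt0; rewrite near_withinE.
have e_gt0 : 0 < Num.min d (eps / (`|C| + 1)).
  by rewrite lt_min d_gt0 divr_gt0 // ltr_wpDl.
apply: filterS (edist_nbhs x e_gt0) => x' xx' Ax'.
rewrite lt_min in xx'; case/andP: xx' => xx'_d xx'_eps.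
apply: le_lt_trans (normr_le_enorm _) (le_lt_trans (phiC x' Ax' (ltW xx'_d)) _).
rewrite ltr_pdivlMr ?ltr_wpDl // in xx'_eps.
have := edist_ge0 x x'; have := ler_norm C; nra.
Qed.

Lemma b_infty_continuous A B phi (K : R) :
  open A -> bdry A !=set0 -> bdry B !=set0 -> 0 < K ->
  (forall x x', A x -> A x' ->
     (b_infty B (phi x) (phi x') <= K%:E * b_infty A x x')%E) ->
  {within A, continuous phi}.
Proof.
move=> oA A_ne [w Bw] K_gt0 bBA; apply: within_continuous_edist => x Ax.
have Ax_gt0 := bdist_gt0 oA A_ne Ax.
exists (bdist A x / (2 * K)); first by rewrite divr_gt0 ?mulr_gt0.
exists (2 * K * edist (phi x) w / bdist A x) => x' Ax' xx'.
exact: edist_le_of_b_infty Bw Ax_gt0 K_gt0 (bBA _ _ Ax Ax') xx'.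
Qed.

End Continuity.

Lemma limf_esup_le {T : choiceType} {X : filteredType T} {R : realType}
    (f : X -> \bar R) (F : set_system X) (b : \bar R) :
  (\forall x \near F, (f x <= b)%E) -> (limf_esup f F <= b)%E.
Proof.
move=> Ffb; apply: le_trans (ereal_inf_lbound _) _; first by exists [set x | (f x <= b)%E].
by apply: ge_ereal_sup => _ [x fxb <-].
Qed.

Lemma ediv_le_fin {R : realType} (x y : \bar R) (a b : R) : 0 <= a -> 0 < b ->
  (x <= a%:E)%E -> (b%:E <= y)%E -> (x / y <= (a / b)%:E)%E.
Proof.
move=> a_ge0 b_gt0 xa; case: y => [y by_| _ | //].
  rewrite lee_fin in by_; have y_gt0 := lt_le_trans b_gt0 by_.
  rewrite inver gt_eqF //.
  apply: le_trans (lee_wpmul2r _ xa) _; first by rewrite lee_fin invr_ge0 ltW.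
  by rewrite -EFinM lee_fin ler_wpM2l // lef_pV2.
by rewrite invey mule0 lee_fin divr_ge0 // ltW.
Qed.

Section Dilatation.
Variables (R : realType) (n : nat) (G D : set 'rV[R]_n) (f : 'rV[R]_n -> 'rV[R]_n) (L : R).
Hypotheses (oG : open G) (oD : open D) (G_bdry : bdry G !=set0) (D_bdry : bdry D !=set0).
Hypotheses (fGD : forall x, G x -> D (f x)) (L_ge1 : 1 <= L).
Hypothesis bGD : forall x x', G x -> G x' ->
  (b_infty G x x' <= L%:E * b_infty D (f x) (f x'))%E.
Hypothesis bDG : forall x x', G x -> G x' ->
  (b_infty D (f x) (f x') <= L%:E * b_infty G x x')%E.
Variable z : 'rV[R]_n.
Hypothesis Gz : G z.

Let L_gt0 : 0 < L. Proof. exact: lt_le_trans ltr01 L_ge1. Qed.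
Let dG := bdist G z.
Let dD := bdist D (f z).
Let dG_gt0 : 0 < dG. Proof. exact: bdist_gt0. Qed.
Let dD_gt0 : 0 < dD. Proof. exact/bdist_gt0/fGD. Qed.

Section Sphere.
Variable r : R.
Hypotheses (r_gt0 : 0 < r) (sphere_G : forall z1, edist z1 z = r -> G z1).

Lemma Lf_le : r <= dG / (2 * L) -> (Lf f z r <= (5 / 2 * L * dD / dG * r)%:E)%E.
Proof.
move=> r_le; have [w Dw w_le] := bdist_approx (f z) D_bdry (divr_gt0 dD_gt0 (ltr0n _ 4)).
apply: ge_ereal_sup => _ [z1 z1z <-]; rewrite lee_fin edistC.
have zz1 : edist z z1 = r by rewrite edistC.
apply: le_trans (edist_le_of_b_infty Dw dG_gt0 L_gt0 (bDG Gz (sphere_G z1z)) _) _.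
  by rewrite zz1.
rewrite zz1 -/dG ler_pM2r // ler_pM2r ?invr_gt0 //; rewrite -/dD in w_le.
have := ler_wpM2l (ltW L_gt0) w_le; lra.
Qed.

Lemma lf_ge : r <= dG / 4 -> ((2 / 3 * dD / (L * dG) * r)%:E <= lf f z r)%E.
Proof.
move=> r_le; have [w Gw w_le] := bdist_approx z G_bdry (divr_gt0 dG_gt0 (ltr0n _ 4)).
apply: le_ereal_inf_tmp => _ [z1 z1z <-]; rewrite lee_fin edistC.
have zz1 : edist z z1 = r by rewrite edistC.
have := b_infty_ratio_le Gw dD_gt0 (ltW L_gt0) (bGD Gz (sphere_G z1z)).
rewrite zz1 => ratio_le.
have ratio_ge : 2 / 3 * r / dG <= r / (edist z w + r).
  have -> : 2 / 3 * r / dG = r / (3 / 2 * dG) by field; rewrite gt_eqF.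
  rewrite -/dG in w_le; have zw_ge0 := edist_ge0 z w.
  by rewrite ler_pM2l // lef_pV2 ?posrE ?mulr_gt0 ?ltr_wpDl //; lra.
have -> : 2 / 3 * dD / (L * dG) * r = dD / L * (2 / 3 * r / dG).
  by field; rewrite !gt_eqF.
have -> : edist (f z) (f z1) = dD / L * (L * (edist (f z) (f z1) / dD)).
  by field; rewrite !gt_eqF.
apply: ler_wpM2l; first by rewrite divr_ge0 ?ltW.
by rewrite -/dD in ratio_le; exact: le_trans ratio_ge ratio_le.
Qed.

End Sphere.

Lemma Hf_le : (Hf f z <= (4 * L ^+ 2)%:E)%E.
Proof.
have [d /andP[d_gt0 d_le] zdG] := open_bdist_ball oG G_bdry Gz.
apply: limf_esup_le; near=> r.
have r_gt0 : 0 < r by near: r; exact: nbhs_right_gt.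
have r_lt : r < d / (4 * L).
  by near: r; apply: nbhs_right_lt; rewrite divr_gt0 ?mulr_gt0.
rewrite ltr_pdivlMr ?mulr_gt0 // in r_lt.
have sphere_G z1 : edist z1 z = r -> G z1.
  by move=> z1z; apply: zdG; rewrite edistC z1z; have := L_ge1; nra.
have r_le_2L : r <= dG / (2 * L).
  by rewrite ler_pdivlMr ?mulr_gt0 //; have := L_ge1; nra.
have r_le_4 : r <= dG / 4 by rewrite ler_pdivlMr //; have := L_ge1; nra.
have Lf_r := Lf_le r_gt0 sphere_G r_le_2L; have lf_r := lf_ge r_gt0 sphere_G r_le_4.
apply: le_trans (ediv_le_fin _ _ Lf_r lf_r) _.
- by rewrite !mulr_ge0 ?invr_ge0 ?ltW.
- by rewrite !mulr_gt0 ?invr_gt0 ?mulr_gt0.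
have -> : 5 / 2 * L * dD / dG * r / (2 / 3 * dD / (L * dG) * r) = 15 / 4 * L ^+ 2.
  by field; rewrite !gt_eqF.
by rewrite lee_fin ler_pM2r ?exprn_gt0 //; lra.
Unshelve. all: by end_near.
Qed.

End Dilatation.

Section Homeomorphism.
Variables (R : realType) (n : nat) (G D : set 'rV[R]_n) (f : 'rV[R]_n -> 'rV[R]_n) (L : R).
Hypotheses (oG : open G) (oD : open D) (G_bdry : bdry G !=set0) (D_bdry : bdry D !=set0).
Hypotheses (fG : f @` G = D) (L_gt0 : 0 < L).
Hypothesis bGD : forall x x', G x -> G x' ->
  (b_infty G x x' <= L%:E * b_infty D (f x) (f x'))%E.
Hypothesis bDG : forall x x', G x -> G x' ->
  (b_infty D (f x) (f x') <= L%:E * b_infty G x x')%E.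

Lemma b_infty_inj : {in G &, injective f}.
Proof.
move=> x x'; rewrite !inE => Gx Gx' fxx'; apply/eqP; apply: contraT => xx'.
suff : (b_infty G x x' <= 0)%E by rewrite leNgt b_infty_gt0.
apply: le_trans (bGD Gx Gx') _; rewrite -fxx' -(mule0 L%:E).
by apply: lee_wpmul2l; [rewrite lee_fin ltW | exact: b_infty_xx].
Qed.

Lemma b_infty_homeo_onto : homeo_onto f G D.
Proof.
pose g := 'pinv_(fun=> 0) G f.
have gK y : D y -> f (g y) = y by rewrite -fG => Dy; apply: pinvK; rewrite inE.
have fK x : G x -> g (f x) = x.
  by move=> Gx; apply: (pinvKV _ b_infty_inj); rewrite inE.
have gG y : D y -> G (g y) by rewrite -fG => -[x Gx <-]; rewrite fK.
split; first exact: b_infty_continuous oG G_bdry D_bdry L_gt0 bDG.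
split=> //; exists g; split.
  apply: b_infty_continuous oD D_bdry G_bdry L_gt0 _ => y y' Dy Dy'.
  by have := bGD (gG y Dy) (gG y' Dy'); rewrite !gK.
by split; [rewrite -fG injpinv_image //; exact: b_infty_inj | split].
Qed.

End Homeomorphism.

Theorem theorem4p10 (R : realType) (n : nat) (G D : set 'rV[R]_n)
    (f : 'rV[R]_n -> 'rV[R]_n) (L : R) :
  domain G -> G != setT -> domain D -> D != setT ->
  f @` G = D -> 1 <= L ->
  (forall z1 z2, G z1 -> G z2 ->
     (b_infty G z1 z2 / L%:E <= b_infty D (f z1) (f z2))%E /\
     (b_infty D (f z1) (f z2) <= L%:E * b_infty G z1 z2)%E) ->
  quasiconformal f G D /\
  (forall z, G z -> (Hf f z <= (4 * L ^+ 2)%:E)%E).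
Proof.
move=> [G0 [oG _]] GT [D0 [oD _]] DT fG L_ge1 b_bilip.
have G_bdry := bdry_neq0 oG G0 GT; have D_bdry := bdry_neq0 oD D0 DT.
have L_gt0 : 0 < L by lra.
have bDG x x' : G x -> G x' -> (b_infty D (f x) (f x') <= L%:E * b_infty G x x')%E.
  by move=> Gx Gx'; exact: (b_bilip x x' Gx Gx').2.
have bGD x x' : G x -> G x' -> (b_infty G x x' <= L%:E * b_infty D (f x) (f x'))%E.
  move=> Gx Gx'; have := (b_bilip x x' Gx Gx').1.
  by rewrite inver gt_eqF // muleC lee_pdivrMl.
have fGD x : G x -> D (f x) by move=> Gx; rewrite -fG; exists x.
have Hf_bound z : G z -> (Hf f z <= (4 * L ^+ 2)%:E)%E.
  exact: (Hf_le oG oD G_bdry D_bdry fGD L_ge1 bGD bDG).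
split=> //; split; first exact: b_infty_homeo_onto oG oD G_bdry D_bdry fG L_gt0 bGD bDG.
by exists (4 * L ^+ 2).
Qed.
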